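(* Let $\mathcal N$ be a feed-forward ReLU network with any fixed weights and biases, and let $\mathcal N^{\mathrm{bias}}_0$ be the network with the same weights and all biases set to $0$. Then the total number of (non-empty) activation regions in $\mathbb R^{n_{\mathrm{in}}}$ of $\mathcal N^{\mathrm{bias}}_0$ is at most that of $\mathcal N$.
   Context: A feed-forward ReLU network $\mathcal N$ with input dimension $n_{\mathrm{in}}$ and output dimension $1$ has hidden layers $1,\dots,d$; edges only between consecutive layers (arbitrary connectivity, no tied weights). A neuron $z$ in layer $1$ has pre-activation $z(x)=\sum_i w_{z,i}x_i$; a neuron $z$ in layer $\ell\ge2$ has pre-activation $z(x)=\sum_{z'}w_{z,z'}\max\{0,z'(x)-b_{z'}\}$ over neurons $z'$ of layer $\ell-1$ joined to $z$; $b_z$ is its bias. The output is $\mathcal N(x)=\sum_z w_z\max\{0,z(x)-b_z\}-b_{\mathrm{out}}$ over neurons of layer $d$. An activation region is a non-empty set $\{x:\ \mathrm{sgn}(z(x)-b_z)=a_z\text{ for every hidden neuron }z\}$ for some $a_z\in\{-1,1\}$. *)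

From HB Require Import structures.
From mathcomp Require Import all_boot all_order all_algebra.
From Stdlib Require Import ClassicalDescription.
Set Implicit Arguments. Unset Strict Implicit. Unset Printing Implicit Defensive.
Import Order.TTheory GRing.Theory Num.Theory.
Local Open Scope ring_scope.

(* A feed-forward ReLU network with input dimension nin and hidden layers
   0,...,d-1 (paper's layers 1,...,d); layer l has width w l.
   W l j i : weight of the edge from neuron i of layer l-1 (or input
   coordinate i if l = 0) into neuron j of layer l; an absent edge is a
   weight 0.  b l j : bias of neuron j of layer l. *)

(* pre-activation z(x) of neuron j in layer l (bias not subtracted) *)
Fixpoint preact (R : realFieldType) (nin : nat) (w : nat -> nat)
    (W : nat -> nat -> nat -> R) (b : nat -> nat -> R)
    (l : nat) (x : 'rV[R]_nin) (j : nat) : R :=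
  match l with
  | 0 => \sum_(i < nin) W 0%N j i * x ord0 i
  | l'.+1 => \sum_(i < w l') W l j i * Num.max 0 (preact w W b l' x i - b l' i)
  end.

Definition neuron (d : nat) (w : nat -> nat) : finType := {l : 'I_d & 'I_(w l)}.

(* activation pattern: true encodes +1, false encodes -1 *)
Definition pattern (d : nat) (w : nat -> nat) := {ffun neuron d w -> bool}.

Definition region_nonempty (R : realFieldType) (nin d : nat) (w : nat -> nat)
    (W : nat -> nat -> nat -> R) (b : nat -> nat -> R) (a : pattern d w) : Prop :=
  exists x : 'rV[R]_nin, forall z : neuron d w,
    Num.sg (preact w W b (tag z) x (tagged z) - b (tag z) (tagged z))
    = (if a z then 1 else -1).

Definition region_nonemptyb (R : realFieldType) (nin d : nat) (w : nat -> nat)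
    (W : nat -> nat -> nat -> R) (b : nat -> nat -> R) (a : pattern d w) : bool :=
  if excluded_middle_informative (region_nonempty nin W b a) then true else false.

Definition num_regions (R : realFieldType) (nin d : nat) (w : nat -> nat)
    (W : nat -> nat -> nat -> R) (b : nat -> nat -> R) : nat :=
  #|[set a : pattern d w | region_nonemptyb nin W b a]|.

From HB Require Import structures.
From mathcomp Require Import all_boot all_order all_algebra.
From mathcomp Require Import lra.
From Stdlib Require Import ClassicalDescription.
Import Order.TTheory GRing.Theory Num.Theory.
Local Open Scope ring_scope.

(* Every activation region of the bias-free network N_0 is also an
   activation region of N.  Indeed, the ReLU is positively homogeneous and
   1-Lipschitz, so scaling an input x by t >= 0 scales every bias-free
   pre-activation by t, while the biases only perturb the pre-activations of
   N at t *: x by an amount bounded by a constant [bias_drift l j] that does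
   not depend on t or x.  If x lies in the region of pattern a for N_0, all
   its pre-activations are non-zero; for t large enough, t times them
   dominates the bounded perturbation (drift plus bias), so t *: x lies in
   the region of the same pattern a for N. *)

Lemma relu_lipschitz {R : realFieldType} (u v : R) :
  `|Num.max 0 u - Num.max 0 v| <= `|u - v|.
Proof.
rewrite !maxEle; case: (leP 0 u) => hu; case: (leP 0 v) => hv.
- by [].
- by rewrite subr0 (ger0_norm hu) ger0_norm; lra.
- by rewrite sub0r normrN (ger0_norm hv) ler0_norm; lra.
- by rewrite subrr normr0.
Qed.

Lemma relu_homogeneous {R : realFieldType} (t v : R) : 0 <= t ->
  t * Num.max 0 v = Num.max 0 (t * v).
Proof.
move=> ht; rewrite !maxEle; case: (leP 0 v) => hv; first by rewrite mulr_ge0.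
rewrite mulr0; case: ifP => // h; apply/eqP; rewrite eq_le h /=.
by rewrite mulr_ge0_le0 // ltW.
Qed.

Lemma sg_perturb {R : realFieldType} (u e : R) :
  `|e| < `|u| -> Num.sg (u + e) = Num.sg u.
Proof.
case: (ltrgt0P u) => hu h.
- rewrite ltr_norml in h; case/andP: h => h1 h2.
  by rewrite (gtr0_sg hu) gtr0_sg //; lra.
- rewrite ltr_norml in h; case/andP: h => h1 h2.
  by rewrite (ltr0_sg hu) ltr0_sg //; lra.
- by move: h; rewrite ltNge normr_ge0.
Qed.

Lemma exists_dominating_scale {R : realFieldType} {T : finType}
    (p K : T -> R) : (forall z, p z != 0) ->
  exists2 t : R, 0 < t & forall z, K z < t * `|p z|.
Proof.
move=> p_neq0; pose S := \sum_z `|K z| / `|p z|.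
have S_ge0 : 0 <= S by apply: sumr_ge0 => z _; apply: divr_ge0.
exists (1 + S) => [|z]; first lra.
have pz_gt0 : 0 < `|p z| by rewrite normr_gt0.
have term_le : `|K z| <= S * `|p z|.
  rewrite -ler_pdivrMr // /S (bigD1 z) //= lerDl.
  by apply: sumr_ge0 => i _; apply: divr_ge0.
rewrite mulrDl mul1r; apply: le_lt_trans (ler_norm _) _.
by apply: le_lt_trans term_le _; rewrite ltrDr.
Qed.

Section BiasDrift.
Variables (R : realFieldType) (nin : nat) (w : nat -> nat)
  (W : nat -> nat -> nat -> R) (b : nat -> nat -> R).

(* Upper bound on how far the biases can move the pre-activation of
   neuron j in layer l away from its bias-free value. *)
Fixpoint bias_drift (l j : nat) : R :=
  match l with
  | 0 => 0
  | l'.+1 => \sum_(i < w l') `|W l j i| * (bias_drift l' i + `|b l' i|)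
  end.

Lemma preact_scale_drift (t : R) (x : 'rV[R]_nin) l j : 0 <= t ->
  `|preact w W b l (t *: x) j - t * preact w W (fun _ _ => 0) l x j|
    <= bias_drift l j.
Proof.
move=> ht; elim: l j => [|l IH] j /=.
  rewrite mulr_sumr -sumrB big1 ?normr0 // => i _.
  by rewrite mxE mulrCA subrr.
rewrite mulr_sumr -sumrB; apply: le_trans (ler_norm_sum _ _ _) _.
apply: ler_sum => i _; rewrite mulrCA -mulrBr normrM.
apply: ler_wpM2l => //; rewrite subr0 relu_homogeneous //.
rewrite (le_trans (relu_lipschitz _ _)) // addrAC.
by rewrite (le_trans (ler_normB _ _)) //; apply: lerD.
Qed.

End BiasDrift.

Arguments bias_drift {R} w W b l j.
Arguments preact_scale_drift {R nin} w W b t x l j.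

Lemma region_nonempty_unbiased (R : realFieldType) (nin d : nat)
    (w : nat -> nat) (W : nat -> nat -> nat -> R) (b : nat -> nat -> R)
    (a : pattern d w) :
  region_nonempty nin W (fun _ _ => 0) a -> region_nonempty nin W b a.
Proof.
case=> x Hx.
pose p0 (z : neuron d w) := preact w W (fun _ _ => 0) (tag z) x (tagged z).
pose K (z : neuron d w) :=
  bias_drift w W b (tag z) (tagged z) + `|b (tag z) (tagged z)|.
have p0_neq0 z : p0 z != 0.
  apply/eqP => p0z; move: (Hx z); rewrite subr0 -/(p0 z) p0z sgr0.
  by case: (a z) => /eqP; rewrite eq_sym ?oppr_eq0 oner_eq0.
have [t t_gt0 dominate] := exists_dominating_scale p0 K p0_neq0.
exists (t *: x) => z; rewrite -(Hx z) subr0 -/(p0 z).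
have drift := preact_scale_drift w W b t x (tag z) (tagged z) (ltW t_gt0).
set pb := preact _ _ _ _ _ _ in drift *; set bz := b _ _.
have -> : pb - bz = t * p0 z + ((pb - t * p0 z) - bz).
  by rewrite addrA [t * _ + _]addrC subrK.
rewrite sg_perturb; first by rewrite sgrM (gtr0_sg t_gt0) mul1r.
rewrite normrM (gtr0_norm t_gt0); apply: le_lt_trans (dominate z).
by rewrite (le_trans (ler_normB _ _)) //; apply: lerD.
Qed.

Theorem mainTheorem16 (R : realFieldType) (nin d : nat) (w : nat -> nat)
    (W : nat -> nat -> nat -> R) (b : nat -> nat -> R) :
  (@num_regions R nin d w W (fun _ _ => 0%R) <= @num_regions R nin d w W b)%N.
Proof.
apply/subset_leq_card/subsetP => a; rewrite !inE /region_nonemptyb.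
case: excluded_middle_informative => // unbiased _.
case: excluded_middle_informative => // biased; exfalso.
exact/biased/region_nonempty_unbiased.
Qed.
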